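(* Let $H\in\mathbb{R}^{N\times n}$ with $H^TH$ positive definite, let $c\ge 0$ be an integer, and for $\bar\mu>0$ let $R=\bar\mu I$. Define $F(R)=R(H^TH+R)^{-1}$, $F_{ar}(R)=(H^TH)^{-1}F(R)^{c+1}$, $\mathrm{Cond}(R)=\|H^TH+R\|\,\|(H^TH+R)^{-1}\|$ and $\mathrm{Obj}(R)=\|F_{ar}(R)\|\cdot\mathrm{Cond}(R)$. Then, as functions of $\bar\mu$, $\mathrm{Cond}(R)$ is a bounded decreasing function and $\|F_{ar}(R)\|$ is a bounded increasing function; and the problem $\min_{R\in S_+^n}\mathrm{Obj}(R)$ has a global minimum.
   Context: $\|\cdot\|$ is the spectral norm; $S_+^n$ is the set of $n\times n$ symmetric positive semidefinite matrices. $F_{ar}(R)$ is the residual $(H^TH)^{-1}-(H^TH+R)^{-1}\sum_{i=0}^cF(R)^i$ of approximating $(H^TH)^{-1}$ by the order-$c$ regularized inverse, which equals $(H^TH)^{-1}F(R)^{c+1}$. *)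

From HB Require Import structures.
From mathcomp Require Import all_boot all_order all_algebra.
From mathcomp Require Import boolp classical_sets reals.
Set Implicit Arguments. Unset Strict Implicit. Unset Printing Implicit Defensive.
Import Order.TTheory GRing.Theory Num.Theory.
Local Open Scope ring_scope.
Local Open Scope classical_set_scope.

Definition vnorm2 (R : realType) (n : nat) (v : 'cV[R]_n) : R :=
  Num.sqrt (\sum_(i < n) v i 0 ^+ 2).

Definition specnorm (R : realType) (m n : nat) (A : 'M[R]_(m, n)) : R :=
  sup [set r : R | exists x : 'cV[R]_n, vnorm2 x <= 1 /\ r = vnorm2 (A *m x)].

Definition posdef (R : realType) (n : nat) (A : 'M[R]_n) : Prop :=
  A^T = A /\ forall x : 'cV[R]_n, x != 0 -> 0 < (x^T *m A *m x) 0 0.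
Definition psd (R : realType) (n : nat) (A : 'M[R]_n) : Prop :=
  A^T = A /\ forall x : 'cV[R]_n, 0 <= (x^T *m A *m x) 0 0.

Definition gram (R : realType) (N n : nat) (H : 'M[R]_(N, n)) : 'M[R]_n := H^T *m H.

Definition Fmx (R : realType) (N n : nat) (H : 'M[R]_(N, n)) (Rm : 'M[R]_n) : 'M[R]_n :=
  Rm *m invmx (gram H + Rm).

Definition Far (R : realType) (N n : nat) (H : 'M[R]_(N, n)) (c : nat) (Rm : 'M[R]_n)
  : 'M[R]_n := invmx (gram H) *m (Fmx H Rm) ^+ c.+1.

Definition Cond (R : realType) (N n : nat) (H : 'M[R]_(N, n)) (Rm : 'M[R]_n) : R :=
  specnorm (gram H + Rm) * specnorm (invmx (gram H + Rm)).

Definition Obj (R : realType) (N n : nat) (H : 'M[R]_(N, n)) (c : nat) (Rm : 'M[R]_n) : R :=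
  specnorm (Far H c Rm) * Cond H Rm.

From HB Require Import structures.
From mathcomp Require Import all_boot all_order all_algebra.
From mathcomp Require Import boolp classical_sets reals.
From mathcomp Require Import lra ring.
Set Implicit Arguments. Unset Strict Implicit. Unset Printing Implicit Defensive.
Import Order.TTheory GRing.Theory Num.Theory.
Local Open Scope ring_scope.

(* Write G = H^T H.  For a positive semidefinite A the spectral norm is the
   least r with x^T A x <= r |x|^2; this follows from the Cauchy-Schwarz
   inequality for the form x^T A y, without diagonalising A.  Dually, for
   positive definite A, 1/||A^-1|| is the largest m with m |x|^2 <= x^T A x.
   Adding mu I shifts both bounds by mu, so
   Cond(mu I) = (||G|| + mu) / (1/||G^-1|| + mu), which is nonincreasing in mu
   and at most Cond(0).

   With F(mu) = mu (G + mu I)^-1 and 0 < mu1 <= mu2 we have F(mu1) = F(mu2) C,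
   where C = (mu1/mu2) (G + mu2 I) (G + mu1 I)^-1 commutes with F(mu2) and has
   norm at most 1; hence ||F_ar(mu1 I)|| <= ||F_ar(mu2 I)||.  Since
   ||F(mu)|| <= 1, ||F_ar(mu I)|| <= ||G^-1||.  Finally F(0) = 0, so Obj
   vanishes at R = 0 and is nonnegative everywhere. *)

Lemma discriminant_le0 (R : realFieldType) (a b c : R) :
  0 <= c -> (forall t, 0 <= a + 2 * b * t + c * t ^+ 2) -> b ^+ 2 <= a * c.
Proof.
move=> c_ge0 q_ge0; have [c0|c_neq0] := eqVneq c 0.
  have [b0|b_neq0] := eqVneq b 0; first by rewrite b0 c0 expr0n mulr0.
  have := q_ge0 (- (a + 1) / (2 * b)).
  have -> : a + 2 * b * (- (a + 1) / (2 * b)) + c * (- (a + 1) / (2 * b)) ^+ 2 = -1.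
    by rewrite c0 mul0r addr0; field; rewrite b_neq0.
  by rewrite oppr_ge0 ler10.
have c_gt0 : 0 < c by rewrite lt_neqAle eq_sym c_neq0.
have := q_ge0 (- b / c).
have -> : a + 2 * b * (- b / c) + c * (- b / c) ^+ 2 = a - b ^+ 2 / c by field.
by rewrite subr_ge0 ler_pdivrMr // mulrC.
Qed.

Lemma le_of_sqr_le_mul (R : realDomainType) (x y : R) :
  0 <= x -> 0 <= y -> x ^+ 2 <= y * x -> x <= y.
Proof.
move=> x_ge0 y_ge0; have [->|x_neq0] := eqVneq x 0; first by [].
by rewrite expr2 ler_pM2r // lt_neqAle eq_sym x_neq0.
Qed.

Lemma shifted_ratio_le (R : realFieldType) (g m a b : R) :
  0 < m -> m <= g -> 0 <= a -> a <= b -> (g + b) / (m + b) <= (g + a) / (m + a).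
Proof.
move=> m_gt0 mg a_ge0 ab.
rewrite ler_pdivrMr; last by lra.
rewrite mulrAC ler_pdivlMr; last by lra.
have : 0 <= (b - a) * (g - m) by rewrite mulr_ge0 // subr_ge0.
lra.
Qed.

Section EuclideanSpace.
Variable R : realType.

Definition vdot n (u v : 'cV[R]_n) : R := (u^T *m v) 0 0.

Lemma vdotE n (u v : 'cV[R]_n) : vdot u v = \sum_i u i 0 * v i 0.
Proof. by rewrite /vdot mxE; apply: eq_bigr => i _; rewrite mxE. Qed.

Lemma vdotC n (u v : 'cV[R]_n) : vdot u v = vdot v u.
Proof. by rewrite !vdotE; apply: eq_bigr => i _; rewrite mulrC. Qed.

Lemma vdotDr n (u v w : 'cV[R]_n) : vdot u (v + w) = vdot u v + vdot u w.
Proof. by rewrite /vdot mulmxDr mxE. Qed.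

Lemma vdotZr n (k : R) (u v : 'cV[R]_n) : vdot u (k *: v) = k * vdot u v.
Proof. by rewrite /vdot -scalemxAr mxE. Qed.

Lemma vdotDl n (u v w : 'cV[R]_n) : vdot (v + w) u = vdot v u + vdot w u.
Proof. by rewrite vdotC vdotDr !(vdotC u). Qed.

Lemma vdotZl n (k : R) (u v : 'cV[R]_n) : vdot (k *: v) u = k * vdot v u.
Proof. by rewrite vdotC vdotZr vdotC. Qed.

Lemma vdot_mulmxr n (A : 'M[R]_n) (u v : 'cV[R]_n) :
  vdot u (A *m v) = vdot (A^T *m u) v.
Proof. by rewrite /vdot trmx_mul trmxK mulmxA. Qed.

Lemma vdotxx_ge0 n (u : 'cV[R]_n) : 0 <= vdot u u.
Proof. by rewrite vdotE sumr_ge0 // => i _; rewrite -expr2 sqr_ge0. Qed.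

Lemma vdotxx_gt0 n (u : 'cV[R]_n) : (0 < vdot u u) = (u != 0).
Proof.
rewrite lt_neqAle vdotxx_ge0 andbT eq_sym; apply/negb_inj; rewrite !negbK.
apply/eqP/eqP => [|->]; last by rewrite vdotE big1 // => i _; rewrite mxE mul0r.
rewrite vdotE => /psumr_eq0P u0; apply/matrixP => i j; rewrite ord1 mxE.
have /eqP : u i 0 * u i 0 = 0 by apply: u0 => // k _; rewrite -expr2 sqr_ge0.
by rewrite mulf_eq0 orbb => /eqP.
Qed.

Lemma vnorm2E n (u : 'cV[R]_n) : vnorm2 u = Num.sqrt (vdot u u).
Proof.
by rewrite /vnorm2 vdotE; congr Num.sqrt; apply: eq_bigr => i _; rewrite expr2.
Qed.

Lemma vnorm2_ge0 n (u : 'cV[R]_n) : 0 <= vnorm2 u.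
Proof. by rewrite vnorm2E sqrtr_ge0. Qed.

Lemma vnorm2_gt0 n (u : 'cV[R]_n) : (0 < vnorm2 u) = (u != 0).
Proof. by rewrite vnorm2E sqrtr_gt0 vdotxx_gt0. Qed.

Lemma vnorm2_sqr n (u : 'cV[R]_n) : vnorm2 u ^+ 2 = vdot u u.
Proof. by rewrite vnorm2E sqr_sqrtr // vdotxx_ge0. Qed.

Lemma vnorm20 n : vnorm2 (0 : 'cV[R]_n) = 0.
Proof. by apply/eqP; rewrite eq_le vnorm2_ge0 andbT leNgt vnorm2_gt0 eqxx. Qed.

Lemma vnorm2Z n (k : R) (u : 'cV[R]_n) : vnorm2 (k *: u) = `|k| * vnorm2 u.
Proof. by rewrite !vnorm2E vdotZl vdotZr mulrA -expr2 sqrtrM ?sqr_ge0 // sqrtr_sqr. Qed.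

Lemma const_mx1_neq0 n : (0 < n)%N -> const_mx 1 != 0 :> 'cV[R]_n.
Proof.
move=> n_gt0; apply/eqP => /matrixP/(_ (Ordinal n_gt0) 0).
by rewrite !mxE => /eqP; rewrite oner_eq0.
Qed.

End EuclideanSpace.

Section QuadraticForms.
Variable R : realType.

Definition qform n (A : 'M[R]_n) (x : 'cV[R]_n) : R := vdot x (A *m x).

Lemma qformE n (A : 'M[R]_n) (x : 'cV[R]_n) : (x^T *m A *m x) 0 0 = qform A x.
Proof. by rewrite /qform /vdot mulmxA. Qed.

Lemma psd_qform_ge0 n (A : 'M[R]_n) (x : 'cV[R]_n) : psd A -> 0 <= qform A x.
Proof. by case=> _ A_ge0; rewrite -qformE. Qed.

Lemma posdef_psd n (A : 'M[R]_n) : posdef A -> psd A.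
Proof.
case=> A_sym A_gt0; split=> // x; have [->|x_neq0] := eqVneq x 0.
  by rewrite mulmx0 mxE.
exact/ltW/A_gt0.
Qed.

Lemma psd_cauchy_schwarz n (A : 'M[R]_n) (u v : 'cV[R]_n) :
  psd A -> vdot u (A *m v) ^+ 2 <= qform A u * qform A v.
Proof.
move=> A_psd; apply: discriminant_le0 => [|t]; first exact: psd_qform_ge0.
have := psd_qform_ge0 (u + t *: v) A_psd.
have vAu : vdot v (A *m u) = vdot u (A *m v).
  by rewrite vdot_mulmxr A_psd.1 vdotC.
rewrite /qform mulmxDr -scalemxAr !vdotDl !vdotDr !vdotZl !vdotZr vAu.
by congr (_ <= _); ring.
Qed.

Lemma cauchy_schwarz n (u v : 'cV[R]_n) : vdot u v ^+ 2 <= vdot u u * vdot v v.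
Proof.
have id_psd : psd (1%:M : 'M[R]_n).
  by split=> [|x]; rewrite ?tr_scalar_mx // mulmx1 vdotxx_ge0.
by have := psd_cauchy_schwarz u v id_psd; rewrite /qform !mul1mx.
Qed.

Lemma vdot_le_vnorm2 n (u v : 'cV[R]_n) : vdot u v <= vnorm2 u * vnorm2 v.
Proof.
apply: le_trans (ler_norm _) _.
rewrite -(ler_pXn2r (_ : 0 < 2)%N) ?nnegrE ?mulr_ge0 ?vnorm2_ge0 //.
by rewrite real_normK ?num_real // exprMn !vnorm2_sqr cauchy_schwarz.
Qed.

Lemma qform_shift n (A : 'M[R]_n) (mu : R) (x : 'cV[R]_n) :
  qform (A + mu%:M) x = qform A x + mu * vdot x x.
Proof. by rewrite /qform mulmxDl mul_scalar_mx vdotDr vdotZr. Qed.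

Lemma vnorm2_shift_sqr n (A : 'M[R]_n) (mu : R) (x : 'cV[R]_n) :
  vnorm2 ((A + mu%:M) *m x) ^+ 2 =
  vnorm2 (A *m x) ^+ 2 + 2 * mu * qform A x + mu ^+ 2 * vnorm2 x ^+ 2.
Proof.
rewrite !vnorm2_sqr mulmxDl mul_scalar_mx /qform.
by rewrite !vdotDl !vdotDr !vdotZl !vdotZr (vdotC x); ring.
Qed.

Lemma psd_shift n (A : 'M[R]_n) (mu : R) : psd A -> 0 <= mu -> psd (A + mu%:M).
Proof.
move=> A_psd mu_ge0; split=> [|x].
  by rewrite linearD /= A_psd.1 tr_scalar_mx.
by rewrite qformE qform_shift addr_ge0 ?mulr_ge0 ?vdotxx_ge0 ?psd_qform_ge0.
Qed.

Lemma posdef_shift n (A : 'M[R]_n) (mu : R) :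
  posdef A -> 0 <= mu -> posdef (A + mu%:M).
Proof.
move=> A_pd mu_ge0; split=> [|x x_neq0].
  exact: (psd_shift (posdef_psd A_pd) mu_ge0).1.
rewrite qformE qform_shift -qformE ltr_wpDr ?mulr_ge0 ?vdotxx_ge0 //.
exact: A_pd.2.
Qed.

Lemma posdef_unitmx n (A : 'M[R]_n) : posdef A -> A \in unitmx.
Proof.
move=> [A_sym A_gt0]; rewrite unitmxE unitfE; apply/det0P => -[v v_neq0 vA0].
have : 0 < qform A v^T by rewrite -qformE A_gt0 ?trmx_eq0.
by rewrite /qform -A_sym -trmx_mul vA0 trmx0 /vdot mulmx0 mxE ltxx.
Qed.

Lemma qform_invmx n (A : 'M[R]_n) (y : 'cV[R]_n) :
  A \in unitmx -> qform (invmx A) y = qform A (invmx A *m y).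
Proof. by move=> A_unit; rewrite /qform mulKVmx // vdotC. Qed.

Lemma posdef_invmx_psd n (A : 'M[R]_n) : posdef A -> psd (invmx A).
Proof.
move=> A_pd; split=> [|y]; first by rewrite trmx_inv A_pd.1.
rewrite qformE qform_invmx ?posdef_unitmx //.
exact/psd_qform_ge0/posdef_psd.
Qed.

End QuadraticForms.

Section SpectralNorm.
Variable R : realType.

Lemma vnorm2_mulmx_frobenius m n (A : 'M[R]_(m, n)) (x : 'cV[R]_n) :
  vnorm2 (A *m x) <= Num.sqrt (\sum_i \sum_j A i j ^+ 2) * vnorm2 x.
Proof.
have rowE i : \sum_j A i j ^+ 2 = vdot (row i A)^T (row i A)^T.
  by rewrite vdotE; apply: eq_bigr => j _; rewrite !mxE expr2.
have frob_ge0 : 0 <= \sum_i \sum_j A i j ^+ 2.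
  by apply: sumr_ge0 => i _; rewrite rowE vdotxx_ge0.
rewrite !vnorm2E -sqrtrM // ler_sqrt ?mulr_ge0 ?vdotxx_ge0 //.
rewrite [X in X <= _]vdotE mulr_suml; apply: ler_sum => i _.
have -> : (A *m x) i 0 = vdot (row i A)^T x.
  by rewrite /vdot !mxE; apply: eq_bigr => j _; rewrite !mxE.
by rewrite rowE -expr2 cauchy_schwarz.
Qed.

Lemma specnorm_has_sup m n (A : 'M[R]_(m, n)) :
  has_sup [set r : R | exists x : 'cV[R]_n, vnorm2 x <= 1 /\ r = vnorm2 (A *m x)].
Proof.
split; first by exists 0, 0; rewrite vnorm20 ler01 mulmx0 vnorm20.
exists (Num.sqrt (\sum_i \sum_j A i j ^+ 2)) => _ [x [x_le1 ->]].
apply: le_trans (vnorm2_mulmx_frobenius A x) _.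
by rewrite ler_piMr ?sqrtr_ge0.
Qed.

Lemma specnorm_ge0 m n (A : 'M[R]_(m, n)) : 0 <= specnorm A.
Proof.
apply: sup_upper_bound (specnorm_has_sup A) _ _.
by exists 0; rewrite vnorm20 ler01 mulmx0 vnorm20.
Qed.

Lemma vnorm2_mulmx_le m n (A : 'M[R]_(m, n)) (x : 'cV[R]_n) :
  vnorm2 (A *m x) <= specnorm A * vnorm2 x.
Proof.
have [->|x_neq0] := eqVneq x 0; first by rewrite mulmx0 !vnorm20 mulr0.
have x_gt0 : 0 < vnorm2 x by rewrite vnorm2_gt0.
have : vnorm2 (A *m ((vnorm2 x)^-1 *: x)) <= specnorm A.
  apply: sup_upper_bound (specnorm_has_sup A) _ _; exists ((vnorm2 x)^-1 *: x).
  by rewrite vnorm2Z ger0_norm ?invr_ge0 ?vnorm2_ge0 // mulVf ?gt_eqF.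
rewrite -scalemxAr vnorm2Z ger0_norm ?invr_ge0 ?vnorm2_ge0 //.
by rewrite ler_pdivrMl // mulrC.
Qed.

Lemma specnorm_le m n (A : 'M[R]_(m, n)) (K : R) :
  0 <= K -> (forall x, vnorm2 (A *m x) <= K * vnorm2 x) -> specnorm A <= K.
Proof.
move=> K_ge0 AK; apply: ge_sup.
  by exists 0, 0; rewrite vnorm20 ler01 mulmx0 vnorm20.
by move=> _ [x [x_le1 ->]]; apply: le_trans (AK x) (ler_piMr _ _).
Qed.

Lemma specnorm0 m n : specnorm (0 : 'M[R]_(m, n)) = 0.
Proof.
apply/eqP; rewrite eq_le specnorm_ge0 andbT.
by apply: specnorm_le => // x; rewrite mul0mx vnorm20 mul0r.
Qed.

Lemma specnormM m n p (A : 'M[R]_(m, n)) (B : 'M[R]_(n, p)) :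
  specnorm (A *m B) <= specnorm A * specnorm B.
Proof.
apply: specnorm_le => [|x]; first by rewrite mulr_ge0 ?specnorm_ge0.
rewrite -mulmxA -mulrA; apply: le_trans (vnorm2_mulmx_le _ _) _.
by rewrite ler_wpM2l ?specnorm_ge0 ?vnorm2_mulmx_le.
Qed.

Lemma specnormX_le1 n (A : 'M[R]_n) k : specnorm A <= 1 -> specnorm (A ^+ k) <= 1.
Proof.
move=> A_le1; elim: k => [|k IHk].
  by apply: specnorm_le => // x; rewrite expr0 mul1mx mul1r.
rewrite exprS -mulmxE; apply: le_trans (specnormM _ _) _.
by rewrite -[1]mulr1 ler_pM ?specnorm_ge0.
Qed.

Lemma specnorm_gt0 n (A : 'M[R]_n) : (0 < n)%N -> A \in unitmx -> 0 < specnorm A.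
Proof.
move=> n_gt0 A_unit; set x : 'cV[R]_n := const_mx 1.
have x_neq0 : x != 0 by apply: const_mx1_neq0.
have Ax_gt0 : 0 < vnorm2 (A *m x).
  rewrite vnorm2_gt0; apply: contraNneq x_neq0 => Ax0.
  by rewrite -(mulKmx A_unit x) Ax0 mulmx0.
have := lt_le_trans Ax_gt0 (vnorm2_mulmx_le A x).
by rewrite pmulr_lgt0 // vnorm2_gt0.
Qed.

End SpectralNorm.

Section Rayleigh.
Variables (R : realType) (n : nat).
Implicit Types (A : 'M[R]_n) (x y z : 'cV[R]_n).

Lemma qform_le_specnorm A x : qform A x <= specnorm A * vdot x x.
Proof.
apply: le_trans (vdot_le_vnorm2 _ _) _.
rewrite -vnorm2_sqr expr2 mulrCA ler_wpM2l ?vnorm2_ge0 //.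
exact: vnorm2_mulmx_le.
Qed.

Hypothesis n_gt0 : (0 < n)%N.

Lemma psd_specnorm_le A (r : R) :
  psd A -> (forall x, qform A x <= r * vdot x x) -> specnorm A <= r.
Proof.
move=> A_psd Ar; have r_ge0 : 0 <= r.
  have := vdotxx_gt0 (const_mx 1 : 'cV[R]_n); rewrite const_mx1_neq0 // => one_gt0.
  by rewrite -(pmulr_lge0 _ one_gt0); apply: le_trans (psd_qform_ge0 _ A_psd) (Ar _).
apply: specnorm_le => // x.
rewrite -(ler_pXn2r (_ : 0 < 2)%N) ?nnegrE ?mulr_ge0 ?vnorm2_ge0 //.
rewrite exprMn !vnorm2_sqr; apply: le_of_sqr_le_mul; rewrite ?mulr_ge0 ?vdotxx_ge0 //.
(* Cauchy-Schwarz for the form of A at Ax and x: |Ax|^4 <= q(Ax) q(x). *)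
apply: le_trans (psd_cauchy_schwarz _ _ A_psd) _.
have := ler_pM (psd_qform_ge0 _ A_psd) (psd_qform_ge0 _ A_psd) (Ar (A *m x)) (Ar x).
rewrite /qform; lra.
Qed.

(* For positive definite A, 1/||A^-1|| plays the role of the smallest
   eigenvalue: by this lemma and the next it is the largest mu with
   mu |x|^2 <= x^T A x. *)
Lemma qform_ge_invmx_specnorm A x :
  posdef A -> (specnorm (invmx A))^-1 * vdot x x <= qform A x.
Proof.
move=> A_pd; have A_unit := posdef_unitmx A_pd.
have Ainv_psd := posdef_invmx_psd A_pd.
have h_gt0 : 0 < specnorm (invmx A) by rewrite specnorm_gt0 ?unitmx_inv.
rewrite mulrC ler_pdivrMr //; apply: le_of_sqr_le_mul.
- exact: vdotxx_ge0.
- exact/mulr_ge0/specnorm_ge0/psd_qform_ge0/posdef_psd.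
(* Cauchy-Schwarz for the form of A^-1 at Ax and x: |x|^4 <= q(x) q_{A^-1}(x). *)
have := psd_cauchy_schwarz (A *m x) x Ainv_psd.
rewrite vdot_mulmxr Ainv_psd.1 mulKmx // qform_invmx // mulKmx // => cs.
apply: le_trans cs _; rewrite -mulrA ler_wpM2l ?qform_le_specnorm //.
exact/psd_qform_ge0/posdef_psd.
Qed.

Lemma le_invmx_specnorm A (mu : R) :
  posdef A -> (forall x, mu * vdot x x <= qform A x) -> mu <= (specnorm (invmx A))^-1.
Proof.
move=> A_pd Amu; have A_unit := posdef_unitmx A_pd.
have h_gt0 : 0 < specnorm (invmx A) by rewrite specnorm_gt0 ?unitmx_inv.
have [mu_le0|mu_gt0] := lerP mu 0.
  by rewrite (le_trans mu_le0) ?invr_ge0 ?specnorm_ge0.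
rewrite -[mu]invrK lef_pV2 ?posrE ?invr_gt0 //.
apply: psd_specnorm_le (posdef_invmx_psd A_pd) _ => y.
rewrite qform_invmx //; set z := invmx A *m y.
have y_eq : A *m z = y by rewrite mulKVmx.
apply: le_of_sqr_le_mul.
- exact/psd_qform_ge0/posdef_psd.
- by rewrite mulr_ge0 ?invr_ge0 ?vdotxx_ge0 ?ltW.
have zy : vdot z z * vdot y y <= mu^-1 * vdot y y * qform A z.
  by rewrite mulrAC ler_wpM2r ?vdotxx_ge0 // ler_pdivlMl // Amu.
by apply: le_trans zy; rewrite /qform y_eq cauchy_schwarz.
Qed.

Lemma specnorm_psd_shift A (mu : R) :
  psd A -> 0 <= mu -> specnorm (A + mu%:M) = specnorm A + mu.
Proof.
move=> A_psd mu_ge0; apply/le_anti/andP; split.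
  apply: psd_specnorm_le (psd_shift A_psd mu_ge0) _ => x.
  by rewrite qform_shift mulrDl lerD2r qform_le_specnorm.
rewrite -lerBrDr; apply: psd_specnorm_le A_psd _ => x.
have := qform_le_specnorm (A + mu%:M) x; rewrite qform_shift mulrBl; lra.
Qed.

Lemma specnorm_invmx_shift A (mu : R) : posdef A -> 0 <= mu ->
  (specnorm (invmx (A + mu%:M)))^-1 = (specnorm (invmx A))^-1 + mu.
Proof.
move=> A_pd mu_ge0; have Amu_pd := posdef_shift A_pd mu_ge0.
apply/le_anti/andP; split.
  rewrite -lerBlDr; apply: le_invmx_specnorm A_pd _ => x.
  have := qform_ge_invmx_specnorm x Amu_pd; rewrite qform_shift mulrBl; lra.
apply: le_invmx_specnorm Amu_pd _ => x.
by rewrite qform_shift mulrDl lerD2r qform_ge_invmx_specnorm.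
Qed.

Lemma invmx_specnorm_le_specnorm A : posdef A -> (specnorm (invmx A))^-1 <= specnorm A.
Proof.
move=> A_pd; set x : 'cV[R]_n := const_mx 1.
have x_gt0 : 0 < vdot x x by rewrite vdotxx_gt0 const_mx1_neq0.
have := le_trans (qform_ge_invmx_specnorm x A_pd) (qform_le_specnorm A x).
by rewrite ler_pM2r.
Qed.

End Rayleigh.

Section Shifts.
Variables (R : realType) (n : nat).
Implicit Types (A : 'M[R]_n) (z : 'cV[R]_n).

Lemma vnorm2_shift_ge A (mu : R) z :
  psd A -> 0 <= mu -> mu * vnorm2 z <= vnorm2 ((A + mu%:M) *m z).
Proof.
move=> A_psd mu_ge0.
rewrite -(ler_pXn2r (_ : 0 < 2)%N) ?nnegrE ?mulr_ge0 ?vnorm2_ge0 //.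
rewrite vnorm2_shift_sqr exprMn addrC lerDl addr_ge0 ?sqr_ge0 //.
by rewrite !mulr_ge0 // psd_qform_ge0.
Qed.

Lemma vnorm2_shift_le A (a b : R) z : psd A -> 0 <= a -> a <= b ->
  a * vnorm2 ((A + b%:M) *m z) <= b * vnorm2 ((A + a%:M) *m z).
Proof.
move=> A_psd a_ge0 ab; have b_ge0 := le_trans a_ge0 ab.
rewrite -(ler_pXn2r (_ : 0 < 2)%N) ?nnegrE ?mulr_ge0 ?vnorm2_ge0 //.
rewrite !exprMn !vnorm2_shift_sqr.
have := psd_qform_ge0 z A_psd; have := sqr_ge0 (vnorm2 (A *m z)).
move: (vnorm2 (A *m z) ^+ 2) (qform A z) (vnorm2 z ^+ 2) => g q s g_ge0 q_ge0.
have : 0 <= (b ^+ 2 - a ^+ 2) * g + 2 * (a * b) * (b - a) * q.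
  by rewrite addr_ge0 ?mulr_ge0 ?subr_ge0 ?ler_pXn2r ?nnegrE.
lra.
Qed.

Lemma shift_invmx_comm A (a b : R) : A + a%:M \in unitmx ->
  (A + b%:M) *m invmx (A + a%:M) = invmx (A + a%:M) *m (A + b%:M).
Proof.
move=> Aa_unit; have -> : A + b%:M = (A + a%:M) + (b - a)%:M.
  by rewrite -addrA -raddfD /= [a + _]addrC subrK.
by rewrite mulmxDl mulmxDr mulmxV // mulVmx // mul_scalar_mx mul_mx_scalar.
Qed.

Lemma specnorm_mulmx_exprM_le (B F C : 'M[R]_n) k : F *m C = C *m F ->
  specnorm C <= 1 -> specnorm (B *m (F *m C) ^+ k) <= specnorm (B *m F ^+ k).
Proof.
move=> FC C_le1; rewrite mulmxE exprMn_comm // -mulmxE mulmxA.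
apply: le_trans (specnormM _ _) _.
by rewrite ler_piMr ?specnorm_ge0 ?specnormX_le1.
Qed.

End Shifts.

Lemma Cond_ge0 (R : realType) N n (H : 'M[R]_(N, n)) (Rm : 'M[R]_n) : 0 <= Cond H Rm.
Proof. by rewrite mulr_ge0 ?specnorm_ge0. Qed.

Lemma Cond_dim0 (R : realType) N (H : 'M[R]_(N, 0)) (Rm : 'M[R]_0) : Cond H Rm = 0.
Proof. by rewrite /Cond (flatmx0 (gram H + Rm)) specnorm0 mul0r. Qed.

Lemma Obj0 (R : realType) N n (H : 'M[R]_(N, n)) c : Obj H c 0 = 0.
Proof. by rewrite /Obj /Far /Fmx mul0mx expr0n /= mulmx0 specnorm0 mul0r. Qed.

Section ScalarRegularization.
Variables (R : realType) (N n : nat) (H : 'M[R]_(N, n)).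
Local Notation G := (gram H).
Hypothesis G_pd : posdef G.

Lemma shift_unitmx (mu : R) : 0 <= mu -> G + mu%:M \in unitmx.
Proof. by move=> mu_ge0; apply/posdef_unitmx/posdef_shift. Qed.

Lemma Fmx_scalar (mu : R) : Fmx H mu%:M = mu *: invmx (G + mu%:M).
Proof. by rewrite /Fmx mul_scalar_mx. Qed.

Lemma specnorm_Fmx_le1 (mu : R) : 0 <= mu -> specnorm (Fmx H mu%:M) <= 1.
Proof.
move=> mu_ge0; apply: specnorm_le => // y; rewrite mul1r Fmx_scalar -scalemxAl.
have {2}-> : y = (G + mu%:M) *m (invmx (G + mu%:M) *m y).
  by rewrite mulKVmx ?shift_unitmx.
by rewrite vnorm2Z ger0_norm // vnorm2_shift_ge //; exact: posdef_psd.
Qed.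

Lemma specnorm_Far_le_invmx c (mu : R) :
  0 <= mu -> specnorm (Far H c mu%:M) <= specnorm (invmx G).
Proof.
move=> mu_ge0; apply: le_trans (specnormM _ _) _.
by rewrite ler_piMr ?specnorm_ge0 ?specnormX_le1 ?specnorm_Fmx_le1.
Qed.

Lemma specnorm_Far_scalar_le c (mu1 mu2 : R) : 0 < mu1 -> mu1 <= mu2 ->
  specnorm (Far H c mu1%:M) <= specnorm (Far H c mu2%:M).
Proof.
move=> mu1_gt0 mu12; have mu2_gt0 := lt_le_trans mu1_gt0 mu12.
have A1_unit := shift_unitmx (ltW mu1_gt0).
have A2_unit := shift_unitmx (ltW mu2_gt0).
set C := (mu1 / mu2) *: ((G + mu2%:M) *m invmx (G + mu1%:M)).
have mu21 : mu1 / mu2 * mu2 = mu1 by rewrite divfK ?gt_eqF.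
have F2C : Fmx H mu2%:M *m C = Fmx H mu1%:M.
  by rewrite !Fmx_scalar -scalemxAr -scalemxAl scalerA mu21 mulmxA mulVmx ?mul1mx.
have CF2 : C *m Fmx H mu2%:M = Fmx H mu1%:M.
  rewrite !Fmx_scalar -scalemxAr -scalemxAl scalerA [mu2 * _]mulrC mu21.
  by rewrite shift_invmx_comm // -mulmxA mulmxV ?mulmx1.
have C_le1 : specnorm C <= 1.
  apply: specnorm_le => // y; rewrite mul1r.
  have -> : y = (G + mu1%:M) *m (invmx (G + mu1%:M) *m y) by rewrite mulKVmx.
  set z := invmx _ *m y; rewrite -scalemxAl -mulmxA mulKmx // vnorm2Z ger0_norm.
    rewrite mulrAC ler_pdivrMr // [_ * mu2]mulrC.
    exact: vnorm2_shift_le (posdef_psd G_pd) (ltW mu1_gt0) mu12.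
  by rewrite divr_ge0 ?ltW.
by rewrite /Far -F2C specnorm_mulmx_exprM_le // F2C CF2.
Qed.

Lemma Cond_scalar (mu : R) : (0 < n)%N -> 0 <= mu ->
  Cond H mu%:M = (specnorm G + mu) / ((specnorm (invmx G))^-1 + mu).
Proof.
move=> n_gt0 mu_ge0; rewrite /Cond (specnorm_psd_shift n_gt0 (posdef_psd G_pd)) //.
by rewrite -[specnorm (invmx (G + _))]invrK specnorm_invmx_shift.
Qed.

Lemma Cond_scalar_le (mu1 mu2 : R) : 0 <= mu1 -> mu1 <= mu2 ->
  Cond H mu2%:M <= Cond H mu1%:M.
Proof.
move=> mu1_ge0 mu12; have [n0|n_gt0] := posnP n.
  by subst n; rewrite !Cond_dim0.
rewrite !Cond_scalar ?(le_trans mu1_ge0) //; apply: shifted_ratio_le => //.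
  by rewrite invr_gt0 specnorm_gt0 ?unitmx_inv ?posdef_unitmx.
exact: invmx_specnorm_le_specnorm.
Qed.

End ScalarRegularization.

Theorem proposition1 (R : realType) (N n : nat) (H : 'M[R]_(N, n)) (c : nat) :
  posdef (gram H) ->
  (* Cond(mu I) is bounded and decreasing (nonincreasing) on mu > 0 *)
  ((exists M : R, forall mu : R, 0 < mu -> `|Cond H (mu%:M)| <= M) /\
   (forall mu1 mu2 : R, 0 < mu1 -> mu1 <= mu2 ->
      Cond H (mu2%:M) <= Cond H (mu1%:M))) /\
  (* ||F_ar(mu I)|| is bounded and increasing (nondecreasing) on mu > 0 *)
  ((exists M : R, forall mu : R, 0 < mu -> `|specnorm (Far H c (mu%:M))| <= M) /\
   (forall mu1 mu2 : R, 0 < mu1 -> mu1 <= mu2 ->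
      specnorm (Far H c (mu1%:M)) <= specnorm (Far H c (mu2%:M)))) /\
  (* min over R in S_+^n of Obj(R) is attained *)
  (exists R0 : 'M[R]_n, psd R0 /\
     forall Rm : 'M[R]_n, psd Rm -> Obj H c R0 <= Obj H c Rm).
Proof.
move=> G_pd; split; [split|split; [split|]].
- exists (Cond H 0%:M) => mu mu_gt0.
  by rewrite ger0_norm ?Cond_ge0 // Cond_scalar_le // ltW.
- by move=> mu1 mu2 /ltW; apply: Cond_scalar_le.
- exists (specnorm (invmx (gram H))) => mu /ltW mu_ge0.
  by rewrite ger0_norm ?specnorm_ge0 // specnorm_Far_le_invmx.
- by move=> mu1 mu2; apply: specnorm_Far_scalar_le.
- exists 0; split=> [|Rm _].
    by split=> [|x]; rewrite ?trmx0 // mulmx0 mul0mx mxE.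
  by rewrite Obj0 mulr_ge0 ?specnorm_ge0 ?Cond_ge0.
Qed.
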